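(* Assume $f$ is backward contracting, and for each $\delta>0$ let $W_\delta$ be the pull-back of $\tilde B(2\delta)$ by $f^{n(\delta)-1}$ containing $c$. Then for every sufficiently small $\delta>0$ we have $R(\delta)\ge\delta/\mathrm{diam}(W_\delta)$.
   Context: Standing setting: $d\ge2$, $c\in\mathbb{C}$, $f(z)=z^d+c$, critical point $0$ non-periodic and recurrent, critical value $c$. $\tilde B(\delta)=B(0,\delta^{1/d})$; a pull-back of $V$ by $f^n$ is a connected component of $f^{-n}(V)$. $R(\delta)=\inf\{\delta/\mathrm{diam}(U): U$ a pull-back of $\tilde B(\delta)$ by some $f^n$, $n\ge0$, with $c\in U\}$. $r(\delta)=\sup\{r>0:$ every pull-back $W$ of $\tilde B(\delta r)$ with $\mathrm{dist}(W,c)\le\delta$ has $\mathrm{diam}(W)<\delta\}$; $f$ is backward contracting if $r(\delta)\to\infty$ as $\delta\to0$. $n(\delta)$ is the minimal integer $n\ge1$ with $f^n(0)\in\tilde B(\delta)$. *)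

From Stdlib Require Import Reals Lra Classical ClassicalEpsilon.
Open Scope R_scope.

Definition Cx : Type := (R * R)%type.
Definition C0 : Cx := (0, 0).
Definition Cadd (z w : Cx) : Cx := (fst z + fst w, snd z + snd w).
Definition Cmul (z w : Cx) : Cx :=
  (fst z * fst w - snd z * snd w, fst z * snd w + snd z * fst w).
Fixpoint Cpow (z : Cx) (n : nat) : Cx :=
  match n with O => (1, 0) | S m => Cmul z (Cpow z m) end.
Definition Cdist (z w : Cx) : R :=
  sqrt ((fst z - fst w) ^ 2 + (snd z - snd w) ^ 2).

Definition fpoly (d : nat) (c : Cx) (z : Cx) : Cx := Cadd (Cpow z d) c.
Fixpoint iter (n : nat) (g : Cx -> Cx) (z : Cx) : Cx :=
  match n with O => z | S m => g (iter m g z) end.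

Definition ball (a : Cx) (r : R) : Cx -> Prop := fun z => Cdist z a < r.
Definition Btilde (d : nat) (delta : R) : Cx -> Prop :=
  ball C0 (Rpower delta (/ INR d)).

Definition open_set (U : Cx -> Prop) : Prop :=
  forall z, U z -> exists e, 0 < e /\ forall w, Cdist w z < e -> U w.

Definition connected (S : Cx -> Prop) : Prop :=
  ~ (exists U V, open_set U /\ open_set V /\
       (forall z, S z -> U z \/ V z) /\
       (exists z, S z /\ U z) /\ (exists z, S z /\ V z) /\
       (forall z, S z -> U z -> V z -> False)).

(** connected component of A containing x (empty if x is not in A) *)
Definition component (A : Cx -> Prop) (x : Cx) : Cx -> Prop :=
  fun z => exists S, connected S /\ (forall w, S w -> A w) /\ S x /\ S z.

Definition preimage (g : Cx -> Cx) (V : Cx -> Prop) : Cx -> Prop :=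
  fun z => V (g z).

Definition pullback (d : nat) (c : Cx) (V : Cx -> Prop) (n : nat)
  (U : Cx -> Prop) : Prop :=
  exists x, preimage (iter n (fpoly d c)) V x /\
    forall z, U z <-> component (preimage (iter n (fpoly d c)) V) x z.

Definition is_glb (S : R -> Prop) (m : R) : Prop :=
  (forall x, S x -> m <= x) /\ (forall b, (forall x, S x -> b <= x) -> b <= m).

Definition diam (U : Cx -> Prop) : R :=
  epsilon (inhabits 0)
    (is_lub (fun r => exists z w, U z /\ U w /\ r = Cdist z w)).

Definition dist_to (U : Cx -> Prop) (a : Cx) : R :=
  epsilon (inhabits 0) (is_glb (fun r => exists z, U z /\ r = Cdist z a)).

Definition Rdelta (d : nat) (c : Cx) (delta : R) : R :=
  epsilon (inhabits 0)
    (is_glb (fun x => exists n U, pullback d c (Btilde d delta) n U /\ U c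
                                  /\ x = delta / diam U)).

(** r is admissible in the definition of r(delta) (r(delta) is the sup of such r) *)
Definition r_adm (d : nat) (c : Cx) (delta r : R) : Prop :=
  0 < r /\ forall n W, pullback d c (Btilde d (delta * r)) n W ->
     dist_to W c <= delta -> diam W < delta.

(** backward contracting: r(delta) -> infinity as delta -> 0, i.e.
    for each M, for delta small, sup of admissible r exceeds M *)
Definition backward_contracting (d : nat) (c : Cx) : Prop :=
  forall M, exists delta0, 0 < delta0 /\
    forall delta, 0 < delta < delta0 -> exists r, r_adm d c delta r /\ M < r.

Definition is_n_delta (d : nat) (c : Cx) (delta : R) (N : nat) : Prop :=
  (1 <= N)%nat /\ Btilde d delta (iter N (fpoly d c) C0) /\
  forall m, (1 <= m < N)%nat -> ~ Btilde d delta (iter m (fpoly d c) C0).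

From Pilot Require Import Defs.
From Stdlib Require Import Reals.
Open Scope R_scope.
From Stdlib Require Import Lra Lia Classical ClassicalEpsilon.
From Stdlib Require Import FunctionalExtensionality PropExtensionality.
From Coquelicot Require Complex.

(** Let N = n(delta) and W = W_delta, the component at c of
    f^-(N-1)(B~(2 delta)).  Take delta below the threshold at which some
    admissible r > 1 exists in the definition of r(delta).  The heart of the
    proof is that every pull-back U of B~(delta) by f^n containing c lies in
    W.  Minimality of n(delta) gives n >= N - 1; the case n = N - 1 is
    immediate, and for n >= N the connected set f^N(U) contains
    f^N(c) = f(f^N(0)), which is delta-close to c, and is mapped by f^(n-N)
    into B~(delta r); so it lies in a pull-back of B~(delta r) meeting the
    delta-neighbourhood of c, whose diameter is < delta by admissibility.
    Thus f^N(U) is within 2 delta of c, i.e. f^(N-1)(U) lies in B~(2 delta).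
    Since U is open and W bounded, 0 < diam U <= diam W, which bounds every
    ratio delta / diam U in the infimum R(delta) from below. *)

Local Notation Cmod := Complex.Cmod.

(** The distance on Cx is the modulus of the difference (Coquelicot's C is
    the same type R * R with the same operations). *)
Lemma Cdist_Cmod (z w : Cx) : Cdist z w = Cmod (Complex.Cminus z w).
Proof. reflexivity. Qed.

Lemma Cdist_C0 (z : Cx) : Cdist z C0 = Cmod z.
Proof. unfold Cdist, Complex.Cmod, C0; simpl; f_equal; ring. Qed.

Lemma Cdist_nonneg (z w : Cx) : 0 <= Cdist z w.
Proof. apply sqrt_pos. Qed.

Lemma Cdist_sym (z w : Cx) : Cdist z w = Cdist w z.
Proof. unfold Cdist; f_equal; ring. Qed.

Lemma Cdist_refl (z : Cx) : Cdist z z = 0.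
Proof.
  rewrite Cdist_Cmod. replace (Complex.Cminus z z) with (Complex.RtoC 0).
  - apply Complex.Cmod_0.
  - destruct z; unfold Complex.Cminus, Complex.Cplus, Complex.Copp, Complex.RtoC;
      simpl; f_equal; ring.
Qed.

Lemma Cdist_triangle (x y z : Cx) : Cdist x z <= Cdist x y + Cdist y z.
Proof.
  rewrite !Cdist_Cmod.
  replace (Complex.Cminus x z)
    with (Complex.Cplus (Complex.Cminus x y) (Complex.Cminus y z)).
  - apply Complex.Cmod_triangle.
  - destruct x, y, z; unfold Complex.Cminus, Complex.Cplus, Complex.Copp;
      simpl; f_equal; ring.
Qed.

Lemma Cdist_translate (p q c : Cx) : Cdist (Cadd p c) (Cadd q c) = Cdist p q.
Proof. unfold Cdist, Cadd; simpl; f_equal; ring. Qed.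

Lemma Cdist_mul (a b a0 b0 : Cx) :
  Cdist (Cmul a b) (Cmul a0 b0) <= Cmod a * Cdist b b0 + Cdist a a0 * Cmod b0.
Proof.
  rewrite !Cdist_Cmod.
  replace (Complex.Cminus (Cmul a b) (Cmul a0 b0)) with
    (Complex.Cplus (Complex.Cmult a (Complex.Cminus b b0))
                   (Complex.Cmult (Complex.Cminus a a0) b0)).
  - eapply Rle_trans; [apply Complex.Cmod_triangle|].
    rewrite !Complex.Cmod_mult. lra.
  - destruct a, b, a0, b0; unfold Cmul, Complex.Cmult, Complex.Cminus,
      Complex.Cplus, Complex.Copp; simpl; f_equal; ring.
Qed.

Lemma Cdist_fpoly_c (d : nat) (c z : Cx) : Cdist (fpoly d c z) c = Cmod z ^ d.
Proof.
  rewrite <- Complex.Cmod_pow. change (Complex.Cpow z d) with (Cpow z d).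
  unfold fpoly, Cdist, Cadd, Complex.Cmod; simpl; f_equal; ring.
Qed.

Definition continuous_map (g : Cx -> Cx) : Prop :=
  forall z e, 0 < e -> exists h, 0 < h /\
    forall w, Cdist w z < h -> Cdist (g w) (g z) < e.

Lemma continuous_id : continuous_map (fun w => w).
Proof. intros z e He; exists e; auto. Qed.

Lemma continuous_const (a : Cx) : continuous_map (fun _ => a).
Proof.
  intros z e He; exists 1; split; [lra|]. intros w _. rewrite Cdist_refl; exact He.
Qed.

Lemma continuous_comp (g1 g2 : Cx -> Cx) :
  continuous_map g1 -> continuous_map g2 -> continuous_map (fun w => g1 (g2 w)).
Proof.
  intros H1 H2 z e He. destruct (H1 (g2 z) e He) as [h1 [Hh1 P1]].
  destruct (H2 z h1 Hh1) as [h2 [Hh2 P2]]. exists h2; split; auto.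
Qed.

Lemma continuous_mul (g1 g2 : Cx -> Cx) :
  continuous_map g1 -> continuous_map g2 ->
  continuous_map (fun w => Cmul (g1 w) (g2 w)).
Proof.
  intros H1 H2 z e He.
  set (A := Cmod (g1 z) + 1). set (B := Cmod (g2 z) + 1).
  assert (HA : 0 < A) by (pose proof (Complex.Cmod_ge_0 (g1 z)); unfold A; lra).
  assert (HB : 0 < B) by (pose proof (Complex.Cmod_ge_0 (g2 z)); unfold B; lra).
  destruct (H1 z (Rmin 1 (e / (2 * B)))) as [h1 [Hh1 P1]].
  { apply Rmin_pos; [lra|]. apply Rdiv_lt_0_compat; lra. }
  destruct (H2 z (e / (2 * A))) as [h2 [Hh2 P2]].
  { apply Rdiv_lt_0_compat; lra. }
  exists (Rmin h1 h2); split; [apply Rmin_pos; auto|]. intros w Hw.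
  assert (D1 : Cdist (g1 w) (g1 z) < Rmin 1 (e / (2 * B)))
    by (apply P1; eapply Rlt_le_trans; [exact Hw | apply Rmin_l]).
  assert (D2 : Cdist (g2 w) (g2 z) < e / (2 * A))
    by (apply P2; eapply Rlt_le_trans; [exact Hw | apply Rmin_r]).
  pose proof (Rmin_l 1 (e / (2 * B))). pose proof (Rmin_r 1 (e / (2 * B))).
  assert (Hg1w : Cmod (g1 w) <= A).
  { rewrite <- !Cdist_C0 in *. pose proof (Cdist_triangle (g1 w) (g1 z) C0).
    unfold A; rewrite <- Cdist_C0; lra. }
  assert (T1 : Cmod (g1 w) * Cdist (g2 w) (g2 z) < e / 2).
  { apply Rle_lt_trans with (A * Cdist (g2 w) (g2 z)).
    - apply Rmult_le_compat_r; [apply Cdist_nonneg | exact Hg1w].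
    - replace (e / 2) with (A * (e / (2 * A))) by (field; lra).
      apply Rmult_lt_compat_l; assumption. }
  assert (T2 : Cdist (g1 w) (g1 z) * Cmod (g2 z) <= e / 2).
  { replace (e / 2) with (e / (2 * B) * B) by (field; lra).
    apply Rmult_le_compat; [apply Cdist_nonneg | apply Complex.Cmod_ge_0 | lra |].
    unfold B; lra. }
  pose proof (Cdist_mul (g1 w) (g2 w) (g1 z) (g2 z)). lra.
Qed.

Lemma continuous_fpoly (d : nat) (c : Cx) : continuous_map (fpoly d c).
Proof.
  assert (Hpow : forall n, continuous_map (fun z => Cpow z n)).
  { induction n; simpl.
    - apply continuous_const.
    - apply continuous_mul; [apply continuous_id | exact IHn]. }
  intros z e He. destruct (Hpow d z e He) as [h [Hh P]].
  exists h; split; auto. intros w Hw. unfold fpoly. rewrite Cdist_translate. auto.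
Qed.

Lemma continuous_iter (n : nat) (g : Cx -> Cx) :
  continuous_map g -> continuous_map (iter n g).
Proof.
  intro Hg. induction n; simpl.
  - apply continuous_id.
  - apply (continuous_comp g (iter n g)); assumption.
Qed.

Lemma open_ball (a : Cx) (r : R) : Defs.open_set (ball a r).
Proof.
  intros z Hz. unfold ball in *. exists (r - Cdist z a); split; [lra|].
  intros w Hw. pose proof (Cdist_triangle w z a). lra.
Qed.

Lemma open_preimage (g : Cx -> Cx) (V : Cx -> Prop) :
  continuous_map g -> Defs.open_set V -> Defs.open_set (preimage g V).
Proof.
  intros Hg HV z Hz. destruct (HV _ Hz) as [e [He P]].
  destruct (Hg z e He) as [h [Hh Q]]. exists h; split; auto.
  intros w Hw. apply P, Q, Hw.
Qed.

Lemma connected_side (S U V : Cx -> Prop) (x : Cx) :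
  connected S -> Defs.open_set U -> Defs.open_set V ->
  (forall z, S z -> U z \/ V z) -> (forall z, S z -> U z -> V z -> False) ->
  S x -> U x -> forall z, S z -> U z.
Proof.
  intros HS HU HV Hcov Hdis Hx HUx z Hz. apply NNPP; intro HnU.
  apply HS. exists U, V. repeat split; auto.
  - exists x; auto.
  - exists z; split; auto. destruct (Hcov z Hz); tauto.
Qed.

Lemma connected_union (S1 S2 : Cx -> Prop) (x : Cx) :
  connected S1 -> connected S2 -> S1 x -> S2 x ->
  connected (fun z => S1 z \/ S2 z).
Proof.
  intros H1 H2 Hx1 Hx2 [U [V [HU [HV [Hcov [[u [Su Uu]] [[v [Sv Vv]] Hdis]]]]]]].
  assert (Side : forall U' V', Defs.open_set U' -> Defs.open_set V' ->
            (forall z, S1 z \/ S2 z -> U' z \/ V' z) ->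
            (forall z, S1 z \/ S2 z -> U' z -> V' z -> False) ->
            U' x -> forall z, S1 z \/ S2 z -> U' z).
  { intros U' V' HU' HV' Hc Hd Ux z [Hz|Hz].
    - refine (connected_side S1 U' V' x H1 HU' HV' _ _ Hx1 Ux z Hz);
        intros w Hw; [apply Hc | apply Hd]; auto.
    - refine (connected_side S2 U' V' x H2 HU' HV' _ _ Hx2 Ux z Hz);
        intros w Hw; [apply Hc | apply Hd]; auto. }
  destruct (Hcov x (or_introl Hx1)) as [Ux|Vx].
  - apply (Hdis v Sv); auto. exact (Side U V HU HV Hcov Hdis Ux v Sv).
  - apply (Hdis u Su); auto. apply (Side V U HV HU); auto.
    + intros z Hz. destruct (Hcov z Hz); auto.
    + intros z Hz Vz Uz. exact (Hdis z Hz Uz Vz).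
Qed.

Lemma connected_singleton (x : Cx) : connected (fun z => z = x).
Proof.
  intros [U [V [_ [_ [_ [[u [Su Uu]] [[v [Sv Vv]] Hdis]]]]]]]. subst.
  exact (Hdis x eq_refl Uu Vv).
Qed.

Lemma connected_image (g : Cx -> Cx) (S : Cx -> Prop) :
  continuous_map g -> connected S -> connected (fun y => exists x, S x /\ y = g x).
Proof.
  intros Hg HS [U [V [HU [HV [Hcov [[u [[xu [Su Eu]] Uu]] [[v [[xv [Sv Ev]] Vv]] Hdis]]]]]]].
  apply HS. exists (preimage g U), (preimage g V). unfold preimage.
  repeat split.
  - apply open_preimage; auto.
  - apply open_preimage; auto.
  - intros z Hz. apply Hcov. eauto.
  - exists xu; subst; auto.
  - exists xv; subst; auto.
  - intros z Hz. apply Hdis. eauto.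
Qed.

Lemma component_refl (A : Cx -> Prop) (x : Cx) : A x -> component A x x.
Proof.
  intro Hx. exists (fun z => z = x). repeat split; auto.
  - apply connected_singleton.
  - intros w Hw; subst; exact Hx.
Qed.

Lemma component_sub (A : Cx -> Prop) (x z : Cx) : component A x z -> A z.
Proof. intros [S [_ [HS [_ Hz]]]]. auto. Qed.

Lemma component_sym (A : Cx -> Prop) (x y : Cx) : component A x y -> component A y x.
Proof. intros [S [HS [HA [Hx Hy]]]]. exists S; auto. Qed.

Lemma component_join (A : Cx -> Prop) (x y z : Cx) :
  component A x y -> component A x z -> component A y z.
Proof.
  intros [S1 [C1 [A1 [X1 Y1]]]] [S2 [C2 [A2 [X2 Z2]]]].
  exists (fun w => S1 w \/ S2 w). repeat split; auto.
  - exact (connected_union S1 S2 x C1 C2 X1 X2).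
  - intros w [H|H]; auto.
Qed.

Lemma component_trans (A : Cx -> Prop) (x y z : Cx) :
  component A x y -> component A y z -> component A x z.
Proof. intros Hxy Hyz. exact (component_join A y x z (component_sym A x y Hxy) Hyz). Qed.

(** Connectedness of [0, h]: a relatively open cover of [0, h] by two sets
    disjoint on it, the first containing 0, misses the second entirely.
    This is the usual least-upper-bound argument. *)
Definition open_real (P : R -> Prop) : Prop :=
  forall t, P t -> exists e, 0 < e /\ forall s, Rabs (s - t) < e -> P s.

Lemma interval_no_separation (P Q : R -> Prop) (h : R) :
  open_real P -> open_real Q ->
  (forall t, 0 <= t <= h -> P t \/ Q t) ->
  (forall t, 0 <= t <= h -> P t -> Q t -> False) ->
  P 0 -> forall t, 0 <= t <= h -> ~ Q t.
Proof.
  intros HP HQ Hcov Hdis P0 t0 Ht0 Qt0.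
  set (E := fun s => 0 <= s <= h /\ forall t, 0 <= t <= s -> P t).
  assert (HE0 : E 0).
  { split; [lra|]. intros t Ht. replace t with 0 by lra. exact P0. }
  assert (Hb : bound E) by (exists h; intros s [Hs _]; lra).
  destruct (completeness E Hb (ex_intro _ 0 HE0)) as [s [Hub Hlub]].
  assert (Hs0 : 0 <= s) by (apply Hub; exact HE0).
  assert (Hsh : s <= h) by (apply Hlub; intros x [Hx _]; lra).
  assert (Hbelow : forall t, 0 <= t < s -> P t).
  { intros t Ht. apply NNPP; intro Hn.
    assert (s <= t); [|lra].
    apply Hlub. intros x [Hx Hx2]. apply Rnot_lt_le. intro Hlt. apply Hn, Hx2. lra. }
  destruct (Hcov s (conj Hs0 Hsh)) as [Ps|Qs].
  - (* s is interior to P, so E reaches h and covers t0 *)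
    destruct (HP s Ps) as [e [He Pe]].
    set (s' := Rmin h (s + e / 2)).
    assert (Hs' : s' <= h) by apply Rmin_l.
    assert (Es' : E s').
    { split; [split; [apply Rmin_glb; lra | exact Hs'] |].
      intros t Ht. destruct (Rlt_le_dec t s); [apply Hbelow; lra|].
      apply Pe. pose proof (Rmin_r h (s + e / 2)). unfold s' in Ht.
      rewrite Rabs_right; lra. }
    assert (s' <= s) by (apply Hub; exact Es').
    assert (s' = h).
    { unfold s' in *. unfold Rmin in *. destruct (Rle_dec h (s + e / 2)); lra. }
    apply (Hdis t0 Ht0); [|exact Qt0].
    destruct (Rlt_le_dec t0 s); [apply Hbelow; lra|]. replace t0 with s by lra. exact Ps.
  - (* s is interior to Q, contradicting P on [0, s) *)
    destruct (Rle_lt_dec s 0).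
    + replace s with 0 in Qs by lra. exact (Hdis 0 ltac:(lra) P0 Qs).
    + destruct (HQ s Qs) as [e [He Qe]].
      set (t := Rmax 0 (s - e / 2)).
      assert (Ht : 0 <= t < s) by (split; [apply Rmax_l | apply Rmax_lub_lt; lra]).
      apply (Hdis t); [lra | apply Hbelow; exact Ht |].
      apply Qe. pose proof (Rmax_r 0 (s - e / 2)). unfold t in *.
      rewrite Rabs_left by lra. lra.
Qed.

Definition hshift (a : Cx) (t : R) : Cx := (fst a + t, snd a).

Definition segment (a : Cx) (h : R) : Cx -> Prop :=
  fun z => exists t, 0 <= t <= h /\ z = hshift a t.

Lemma Cdist_hshift (a : Cx) (t s : R) : Cdist (hshift a t) (hshift a s) = Rabs (t - s).
Proof.
  unfold Cdist, hshift; simpl.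
  replace ((fst a + t - (fst a + s)) * ((fst a + t - (fst a + s)) * 1) +
           (snd a - snd a) * ((snd a - snd a) * 1)) with ((t - s) * (t - s)) by ring.
  apply sqrt_Rsqr_abs.
Qed.

Lemma hshift_0 (a : Cx) : hshift a 0 = a.
Proof. destruct a; unfold hshift; simpl; f_equal; ring. Qed.

Lemma open_real_hshift (a : Cx) (U : Cx -> Prop) :
  Defs.open_set U -> open_real (fun t => U (hshift a t)).
Proof.
  intros HU t Ut. destruct (HU _ Ut) as [e [He Pe]]. exists e; split; auto.
  intros s Hs. apply Pe. rewrite Cdist_hshift. exact Hs.
Qed.

Lemma connected_segment (a : Cx) (h : R) : connected (segment a h).
Proof.
  intros [U [V [HU [HV [Hcov [[u [Su Uu]] [[v [Sv Vv]] Hdis]]]]]]].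
  assert (Sseg : forall t, 0 <= t <= h -> segment a h (hshift a t))
    by (intros t Ht; exists t; auto).
  assert (Side : forall U' V', Defs.open_set U' -> Defs.open_set V' ->
            (forall z, segment a h z -> U' z \/ V' z) ->
            (forall z, segment a h z -> U' z -> V' z -> False) ->
            U' (hshift a 0) -> forall z, segment a h z -> ~ V' z).
  { intros U' V' HU' HV' Hc Hd U0 z [t [Ht Ez]]. subst z.
    apply (interval_no_separation (fun t => U' (hshift a t)) (fun t => V' (hshift a t)) h);
      auto using open_real_hshift.
    intros s Hs. apply Hd, Sseg, Hs. }
  destruct Su as [tu [Htu Eu]].
  assert (H0 : 0 <= h) by lra.
  destruct (Hcov _ (Sseg 0 (conj (Rle_refl 0) H0))) as [U0|V0].
  - exact (Side U V HU HV Hcov Hdis U0 v Sv Vv).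
  - apply (Side V U HV HU) with (z := u); auto.
    + intros z Hz. destruct (Hcov z Hz); auto.
    + intros z Hz Vz Uz. exact (Hdis z Hz Uz Vz).
    + exists tu; auto.
Qed.

(** Bounded sets; preimages of bounded sets under f (d >= 1) are bounded,
    since |z|^d <= |f z| + |c|. *)
Definition bounded_set (S : Cx -> Prop) : Prop := exists M, forall z, S z -> Cmod z <= M.

Lemma bounded_sub (S T : Cx -> Prop) :
  (forall z, S z -> T z) -> bounded_set T -> bounded_set S.
Proof. intros H [M HM]; exists M; auto. Qed.

Lemma bounded_ball (r : R) : bounded_set (ball C0 r).
Proof. exists r. intros z Hz. unfold ball in Hz. rewrite Cdist_C0 in Hz. lra. Qed.

Lemma bounded_preimage_fpoly (d : nat) (c : Cx) (V : Cx -> Prop) :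
  (1 <= d)%nat -> bounded_set V -> bounded_set (preimage (fpoly d c) V).
Proof.
  intros Hd [M HM]. exists (Rmax 1 (M + Cmod c)). intros z Hz.
  assert (Hzd : Cmod z ^ d <= M + Cmod c).
  { rewrite <- (Cdist_fpoly_c d c z).
    pose proof (Cdist_triangle (fpoly d c z) C0 c) as Htri. pose proof (HM _ Hz).
    rewrite Cdist_C0, (Cdist_sym C0 c), Cdist_C0 in Htri. lra. }
  destruct (Rle_lt_dec (Cmod z) 1) as [Hle|Hgt].
  - apply Rle_trans with 1; [exact Hle | apply Rmax_l].
  - apply Rle_trans with (M + Cmod c); [|apply Rmax_r].
    apply Rle_trans with (Cmod z ^ d); [|exact Hzd].
    rewrite <- (pow_1 (Cmod z)) at 1. apply Rle_pow; [lra | exact Hd].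
Qed.

Lemma bounded_preimage_iter (d : nat) (c : Cx) (n : nat) (V : Cx -> Prop) :
  (1 <= d)%nat -> bounded_set V -> bounded_set (preimage (iter n (fpoly d c)) V).
Proof.
  intro Hd. revert V. induction n as [|n IH]; intros V HV; [exact HV|].
  change (bounded_set (preimage (iter n (fpoly d c)) (preimage (fpoly d c) V))).
  apply IH, bounded_preimage_fpoly; assumption.
Qed.

Lemma bounded_component_preimage (d : nat) (c : Cx) (n : nat) (r : R) (x : Cx) :
  (1 <= d)%nat ->
  bounded_set (component (preimage (iter n (fpoly d c)) (ball C0 r)) x).
Proof.
  intro Hd. eapply bounded_sub; [intros z Hz; eapply component_sub, Hz|].
  apply bounded_preimage_iter; [exact Hd | apply bounded_ball].
Qed.

Lemma diam_is_lub (U : Cx -> Prop) (z0 : Cx) :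
  bounded_set U -> U z0 ->
  is_lub (fun r => exists z w, U z /\ U w /\ r = Cdist z w) (diam U).
Proof.
  intros [M HM] Hz0. unfold diam. apply epsilon_spec.
  destruct (completeness (fun r => exists z w, U z /\ U w /\ r = Cdist z w))
    as [m Hm]; [| |exists m; exact Hm].
  - exists (2 * M). intros r [z [w [Hz [Hw Er]]]]. subst r.
    pose proof (Cdist_triangle z C0 w) as Htri.
    rewrite Cdist_C0, (Cdist_sym C0 w), Cdist_C0 in Htri.
    pose proof (HM z Hz). pose proof (HM w Hw). lra.
  - exists (Cdist z0 z0), z0, z0. auto.
Qed.

Lemma diam_ge (U : Cx -> Prop) (z w : Cx) :
  bounded_set U -> U z -> U w -> Cdist z w <= diam U.
Proof. intros HB Hz Hw. apply (diam_is_lub U z HB Hz). exists z, w; auto. Qed.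

Lemma diam_mono (U W : Cx -> Prop) (z0 : Cx) :
  (forall z, U z -> W z) -> bounded_set W -> U z0 -> diam U <= diam W.
Proof.
  intros HUW HB Hz0. apply (diam_is_lub U z0 (bounded_sub U W HUW HB) Hz0).
  intros r [z [w [Hz [Hw Er]]]]. subst. apply diam_ge; auto.
Qed.

(** A bounded component of an open set has positive diameter: it contains a
    short horizontal segment. *)
Lemma diam_component_pos (P : Cx -> Prop) (x : Cx) :
  Defs.open_set P -> bounded_set (component P x) -> P x -> 0 < diam (component P x).
Proof.
  intros HP HB Px. destruct (HP x Px) as [e [He Pe]].
  assert (Hseg : component P x (hshift x (e / 2))).
  { exists (segment x (e / 2)). repeat split.
    - apply connected_segment.
    - intros w [t [Ht Ew]]. subst w. apply Pe.
      rewrite <- (hshift_0 x) at 2. rewrite Cdist_hshift, Rabs_right; lra.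
    - exists 0. split; [lra | symmetry; apply hshift_0].
    - exists (e / 2). split; [lra | reflexivity]. }
  apply Rlt_le_trans with (Cdist (hshift x (e / 2)) x).
  - rewrite <- (hshift_0 x) at 2. rewrite Cdist_hshift, Rabs_right; lra.
  - apply diam_ge; [exact HB | exact Hseg | apply component_refl, Px].
Qed.

Lemma epsilon_is_glb (S : R -> Prop) (x0 b : R) :
  S x0 -> (forall x, S x -> b <= x) -> is_glb S (epsilon (inhabits 0) (is_glb S)).
Proof.
  intros H0 Hb. apply epsilon_spec.
  destruct (completeness (fun y => S (- y))) as [m [Hub Hlub]].
  - exists (- b). intros y Hy. pose proof (Hb _ Hy). lra.
  - exists (- x0). rewrite Ropp_involutive. exact H0.
  - exists (- m). split.
    + intros x Hx. assert (- x <= m) by (apply Hub; rewrite Ropp_involutive; exact Hx). lra.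
    + intros b' Hb'. assert (m <= - b'); [|lra].
      apply Hlub. intros y Hy. pose proof (Hb' _ Hy). lra.
Qed.

Lemma dist_to_le (U : Cx -> Prop) (a z : Cx) : U z -> dist_to U a <= Cdist z a.
Proof.
  intro Hz. unfold dist_to. apply (epsilon_is_glb _ (Cdist z a) 0).
  - exists z; auto.
  - intros x [w [_ E]]; subst; apply Cdist_nonneg.
  - exists z; auto.
Qed.

Lemma pow_lt_compat (a b : R) (n : nat) : 0 <= a < b -> (1 <= n)%nat -> a ^ n < b ^ n.
Proof.
  intros Hab Hn. induction n as [|n IH]; [lia|]. destruct n as [|n]; [simpl; lra|].
  change (a * a ^ S n < b * b ^ S n).
  pose proof (pow_le a (S n) ltac:(lra)).
  assert (a ^ S n < b ^ S n) by (apply IH; lia). nra.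
Qed.

Lemma Btilde_iff (d : nat) (delta : R) (z : Cx) :
  (1 <= d)%nat -> 0 < delta -> (Btilde d delta z <-> Cmod z ^ d < delta).
Proof.
  intros Hd Hdel. unfold Btilde, ball. rewrite Cdist_C0.
  set (rho := Rpower delta (/ INR d)).
  assert (Hrho : rho ^ d = delta).
  { unfold rho. rewrite <- Rpower_pow by (unfold Rpower; apply exp_pos).
    rewrite Rpower_mult, Rinv_l by (apply not_0_INR; lia). apply Rpower_1, Hdel. }
  assert (0 < rho) by (unfold rho, Rpower; apply exp_pos).
  pose proof (Complex.Cmod_ge_0 z).
  split; intro H1.
  - rewrite <- Hrho. apply pow_lt_compat; [lra | exact Hd].
  - apply Rnot_le_lt. intro H2. assert (rho ^ d <= Cmod z ^ d) by (apply pow_incr; lra). lra.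
Qed.

Lemma Btilde_mono (d : nat) (a b : R) (z : Cx) :
  (1 <= d)%nat -> 0 < a <= b -> Btilde d a z -> Btilde d b z.
Proof.
  intros Hd Hab H. apply (Btilde_iff d a z Hd) in H; [|lra].
  apply (Btilde_iff d b z Hd); lra.
Qed.

Lemma iter_add (a b : nat) (g : Cx -> Cx) (z : Cx) : iter (a + b) g z = iter a g (iter b g z).
Proof. induction a as [|a IH]; simpl; [reflexivity | rewrite IH; reflexivity]. Qed.

Lemma iter_succ_inner (n : nat) (g : Cx -> Cx) (z : Cx) : iter n g (g z) = iter (S n) g z.
Proof. rewrite <- Nat.add_1_r, iter_add. reflexivity. Qed.

(** Since f(0) = c, the orbit of c is the orbit of 0 shifted by one. *)
Lemma iter_c (d : nat) (c : Cx) (n : nat) :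
  (1 <= d)%nat -> iter n (fpoly d c) c = iter (S n) (fpoly d c) C0.
Proof.
  intro Hd. rewrite <- iter_succ_inner. f_equal.
  destruct d as [|d]; [lia|]. destruct c.
  unfold fpoly, Cadd, C0; simpl; f_equal; ring.
Qed.

Lemma pullback_at_c (d : nat) (c : Cx) (V : Cx -> Prop) (n : nat) (U : Cx -> Prop) :
  pullback d c V n U -> U c -> U = component (preimage (iter n (fpoly d c)) V) c.
Proof.
  intros [x [_ HU]] HUc. pose proof (proj1 (HU c) HUc) as Hxc.
  extensionality z. apply propositional_extensionality. rewrite HU. split; intro Hz.
  - exact (component_join _ x c z Hxc Hz).
  - exact (component_trans _ x c z Hxc Hz).
Qed.

Lemma Cdist_iter_c (d : nat) (c z : Cx) (N : nat) :
  (1 <= N)%nat -> Cdist (iter N (fpoly d c) z) c = Cmod (iter (N - 1) (fpoly d c) z) ^ d.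
Proof.
  intro HN. replace N with (S (N - 1)) at 1 by lia. apply Cdist_fpoly_c.
Qed.

Lemma n_delta_le (d : nat) (c : Cx) (delta : R) (N n : nat) :
  (1 <= d)%nat -> is_n_delta d c delta N ->
  Btilde d delta (iter n (fpoly d c) c) -> (N <= S n)%nat.
Proof.
  intros Hd [_ [_ Hmin]] Hn.
  destruct (Nat.le_gt_cases N (S n)) as [Hle|Hgt]; [exact Hle|].
  exfalso. apply (Hmin (S n)); [lia|]. rewrite <- iter_c; assumption.
Qed.

(** Then T lies in a single pull-back of B~(delta r) meeting the
    delta-neighbourhood of c; its diameter is < delta, so T stays within
    2 delta of c. *)
Lemma admissible_confines (d : nat) (c : Cx) (delta r : R) (m : nat)
    (T : Cx -> Prop) (y0 : Cx) :
  (1 <= d)%nat -> r_adm d c delta r -> connected T -> T y0 -> Cdist y0 c <= delta ->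
  (forall y, T y -> Btilde d (delta * r) (iter m (fpoly d c) y)) ->
  forall y, T y -> Cdist y c < 2 * delta.
Proof.
  intros Hd [_ Hadm] HT Ty0 Hy0 HTm y Ty.
  set (W1 := component (preimage (iter m (fpoly d c)) (Btilde d (delta * r))) y0).
  assert (HW1 : forall z, T z -> W1 z)
    by (intros z Tz; exists T; repeat split; auto).
  assert (Hpb : pullback d c (Btilde d (delta * r)) m W1)
    by (exists y0; split; [apply HTm, Ty0 | tauto]).
  assert (Hdist : dist_to W1 c <= delta)
    by (eapply Rle_trans; [apply dist_to_le, HW1, Ty0 | exact Hy0]).
  pose proof (Hadm m W1 Hpb Hdist) as Hdiam.
  assert (Hyy0 : Cdist y y0 <= diam W1).
  { apply diam_ge; [apply bounded_component_preimage, Hd | apply HW1, Ty | apply HW1, Ty0]. }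
  pose proof (Cdist_triangle y y0 c). lra.
Qed.

(** Here n >= N - 1;
    for n >= N apply the contraction step to T = f^N(X), which contains
    f^N(c) = f(f^N(0)) at distance |f^N(0)|^d < delta from c. *)
Lemma connected_maps_into_double_ball (d : nat) (c : Cx) (delta r : R) (N n : nat)
    (X : Cx -> Prop) :
  (1 <= d)%nat -> 0 < delta -> 1 <= r -> r_adm d c delta r -> is_n_delta d c delta N ->
  connected X -> X c -> (forall t, X t -> Btilde d delta (iter n (fpoly d c) t)) ->
  forall t, X t -> Btilde d (2 * delta) (iter (N - 1) (fpoly d c) t).
Proof.
  intros Hd Hdel Hr Hadm HN HX Xc HXn t Xt.
  assert (HNn : (N <= S n)%nat) by (apply (n_delta_le d c delta); auto).
  destruct HN as [HN1 [HN0 _]].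
  destruct (Nat.eq_dec n (N - 1)) as [->|Hne].
  { apply (Btilde_mono d delta); [exact Hd | lra | apply HXn, Xt]. }
  set (T := fun y => exists x, X x /\ y = iter N (fpoly d c) x).
  assert (Hstep : forall y, T y -> Cdist y c < 2 * delta).
  { apply (admissible_confines d c delta r (n - N) T (iter N (fpoly d c) c)); auto.
    - apply connected_image; [apply continuous_iter, continuous_fpoly | exact HX].
    - exists c; auto.
    - rewrite Cdist_iter_c by exact HN1. rewrite iter_c by exact Hd.
      replace (S (N - 1)) with N by lia.
      apply Rlt_le, (Btilde_iff d delta _ Hd Hdel), HN0.
    - intros y [x [Xx ->]]. rewrite <- iter_add.
      replace (n - N + N)%nat with n by lia.
      apply (Btilde_mono d delta); [exact Hd | nra | apply HXn, Xx]. }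
  assert (Hlt : Cdist (iter N (fpoly d c) t) c < 2 * delta) by (apply Hstep; exists t; auto).
  rewrite Cdist_iter_c in Hlt by exact HN1.
  apply (Btilde_iff d (2 * delta)); [exact Hd | lra | exact Hlt].
Qed.

Lemma pullback_in_W (d : nat) (c : Cx) (delta r : R) (N n : nat) (z : Cx) :
  (1 <= d)%nat -> 0 < delta -> 1 <= r -> r_adm d c delta r -> is_n_delta d c delta N ->
  component (preimage (iter n (fpoly d c)) (Btilde d delta)) c z ->
  component (preimage (iter (N - 1) (fpoly d c)) (Btilde d (2 * delta))) c z.
Proof.
  intros Hd Hdel Hr Hadm HN [X [HX [HXP [Xc Xz]]]].
  exists X. repeat split; auto. intros w Xw.
  exact (connected_maps_into_double_ball d c delta r N n X Hd Hdel Hr Hadm HN HX Xc HXP w Xw).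
Qed.

Lemma Rdelta_ge (d : nat) (c : Cx) (delta b : R) (n0 : nat) :
  Btilde d delta (iter n0 (fpoly d c) c) ->
  (forall n U, pullback d c (Btilde d delta) n U -> U c -> b <= delta / diam U) ->
  Rdelta d c delta >= b.
Proof.
  intros H0 Hlow. apply Rle_ge. unfold Rdelta.
  set (U0 := component (preimage (iter n0 (fpoly d c)) (Btilde d delta)) c).
  assert (Hlow' : forall x, (exists n U, pullback d c (Btilde d delta) n U /\ U c
                                 /\ x = delta / diam U) -> b <= x)
    by (intros x [n [U [Hpb [HUc ->]]]]; exact (Hlow n U Hpb HUc)).
  assert (HU0 : pullback d c (Btilde d delta) n0 U0)
    by (exists c; split; [exact H0 | tauto]).
  assert (Hmem : exists n U, pullback d c (Btilde d delta) n U /\ U c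
                             /\ delta / diam U0 = delta / diam U)
    by (exists n0, U0; split; [exact HU0 | split; [apply component_refl, H0 | reflexivity]]).
  exact (proj2 (epsilon_is_glb _ _ b Hmem Hlow') b Hlow').
Qed.

Theorem lemma4p3 (d : nat) (c : Cx)
  (Hd : (2 <= d)%nat)
  (Hnonper : forall n, (1 <= n)%nat -> iter n (fpoly d c) C0 <> C0)
  (Hrec : forall eps, 0 < eps -> forall N, exists n, (N <= n)%nat /\
            Cdist (iter n (fpoly d c) C0) C0 < eps)
  (Hbc : backward_contracting d c) :
  exists delta0, 0 < delta0 /\
    forall delta, 0 < delta < delta0 ->
    forall N, is_n_delta d c delta N ->
      Rdelta d c delta >=
        delta / diam (component (preimage (iter (N - 1) (fpoly d c))
                                          (Btilde d (2 * delta))) c).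
Proof.
  assert (Hd1 : (1 <= d)%nat) by lia.
  destruct (Hbc 1) as [delta0 [Hdelta0 Hr]]. exists delta0. split; [exact Hdelta0|].
  intros delta Hdelta N HN. destruct (Hr delta Hdelta) as [r [Hadm Hr1]].
  assert (Hdel : 0 < delta) by lra.
  set (W := component (preimage (iter (N - 1) (fpoly d c)) (Btilde d (2 * delta))) c).
  assert (Hc : Btilde d delta (iter (N - 1) (fpoly d c) c)).
  { destruct HN as [HN1 [HN0 _]]. rewrite iter_c by exact Hd1.
    replace (S (N - 1)) with N by lia. exact HN0. }
  apply (Rdelta_ge d c delta _ (N - 1) Hc). intros n U Hpb HUc.
  pose proof (pullback_at_c d c _ n U Hpb HUc) as ->.
  set (Un := component (preimage (iter n (fpoly d c)) (Btilde d delta)) c) in *.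
  assert (HUW : forall z, Un z -> W z)
    by (intros z; apply (pullback_in_W d c delta r N n z); auto; lra).
  assert (HUpos : 0 < diam Un).
  { apply diam_component_pos.
    - apply open_preimage; [apply continuous_iter, continuous_fpoly | apply open_ball].
    - apply bounded_component_preimage, Hd1.
    - exact (component_sub _ _ _ HUc). }
  assert (HUle : diam Un <= diam W)
    by (apply (diam_mono _ W c); [exact HUW | apply bounded_component_preimage, Hd1 | exact HUc]).
  unfold Rdiv. apply Rmult_le_compat_l; [lra|]. apply Rinv_le_contravar; assumption.
Qed.
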